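(* Let $X$ be a K3 surface with Picard lattice $N(X)$ and let $H\in N(X)$ be a primitive element with $H^2=8$. Then there exists $h_1\in N(X)$ with $$h_1^2=\pm 4,\qquad H\cdot h_1\equiv 0\pmod 2,\qquad H\cdot[H,h_1]_{\mathrm{pr}}=\mathbb{Z}$$ if and only if there exists $D\in N(X)$ such that the Mukai vector $(2,H+2D,\pm1)$ is isotropic, i.e. $(H+2D)^2=\pm 4$ (with the same sign). Moreover the correspondence is given by $h_1=H+2D$: an $h_1$ with the first set of properties can be written as $h_1=H+2D$ with $D\in N(X)$, and for any $D\in N(X)$ with $(H+2D)^2=\pm4$ the element $h_1=H+2D$ has the first set of properties.
   Context: $N(X)$ is the Picard lattice of the K3 surface $X$; it is an even lattice. $[H,h_1]_{\mathrm{pr}}$ denotes the primitive sublattice of $N(X)$ generated by $H$ and $h_1$, i.e. $N(X)\cap(\mathbb{Q}H+\mathbb{Q}h_1)$, and $H\cdot[H,h_1]_{\mathrm{pr}}$ denotes the set $\{H\cdot x: x\in [H,h_1]_{\mathrm{pr}}\}\subseteq\mathbb{Z}$. A Mukai vector $(r,c_1,s)$ is isotropic when $c_1^2=2rs$. *)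

From mathcomp Require Import all_boot all_order all_algebra.
Set Implicit Arguments. Unset Strict Implicit. Unset Printing Implicit Defensive.
Import GRing.Theory Num.Theory.
Local Open Scope ring_scope.

Definition lform (n : nat) (G : 'M[int]_n) (x y : 'rV[int]_n) : int :=
  (x *m G *m y^T) 0 0.

Definition even_lattice (n : nat) (G : 'M[int]_n) : Prop :=
  G^T = G /\ \det G != 0 /\ forall x : 'rV[int]_n, (2 %| lform G x x)%Z.

Definition primitive (n : nat) (x : 'rV[int]_n) : Prop :=
  forall (k : int) (y : 'rV[int]_n), x = k *: y -> k = 1 \/ k = -1.

(* [H, h]_pr = N ∩ (Q H + Q h) *)
Definition prim_span (n : nat) (H h : 'rV[int]_n) (x : 'rV[int]_n) : Prop :=
  exists (c a b : int), c != 0 /\ c *: x = a *: H + b *: h.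

Definition pairing_surj (n : nat) (G : 'M[int]_n) (H h : 'rV[int]_n) : Prop :=
  forall m : int, exists x, prim_span H h x /\ lform G H x = m.

Definition mukai_isotropic (n : nat) (G : 'M[int]_n) (r : int) (c1 : 'rV[int]_n) (s : int) : Prop :=
  lform G c1 c1 = 2 * r * s.

Definition good_h1 (n : nat) (G : 'M[int]_n) (H h1 : 'rV[int]_n) (s : int) : Prop :=
  lform G h1 h1 = 4 * s /\ (2 %| lform G H h1)%Z /\ pairing_surj G H h1.

From mathcomp Require Import all_boot all_order all_algebra.
From mathcomp Require Import zify ring.
Set Implicit Arguments. Unset Strict Implicit. Unset Printing Implicit Defensive.
Import GRing.Theory Num.Theory.
Local Open Scope ring_scope.

(* If (H + 2D)^2 = 8 + 4 H.D + 4 D^2 equals 4s with s odd, then H.D is odd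
   because D^2 is even, so 8 and H.D are coprime and H.(Z H + Z D) = Z, while
   Z H + Z D lies in [H, H + 2D]_pr.  Conversely, take x in [H, h1]_pr with
   H.x = 1 and c x = a H + b h1 where a, b, c are not all even.  Pairing with
   H and with x, and squaring, gives c = 8a + b H.h1, c x^2 = a + b h1.x and
   c^2 x^2 = (a H + b h1)^2; as N(X) is even and h1^2 = 4 mod 8, this forces
   c even and a, b odd, so h1 - H = c x - (a + 1) H - (b - 1) h1 lies in
   2 N(X). *)

Lemma odd_sqrz_mod8 (d : int) : ~~ (2 %| d)%Z -> exists w, d ^+ 2 = 8 * w + 1.
Proof.
move=> d_odd; have [j ->] : exists j, d = 2 * j + 1 by exists (d %/ 2)%Z; lia.
have [u [-> | ->]] : exists u, j = 2 * u \/ j = 2 * u + 1 by exists (j %/ 2)%Z; lia.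
- by exists (u * (2 * u + 1)); ring.
- by exists ((2 * u + 1) * (u + 1)); ring.
Qed.

Lemma odd_mulz_sqr (s b : int) :
  ~~ (2 %| s)%Z -> ~~ (2 %| b)%Z -> ~~ (2 %| s * b ^+ 2)%Z.
Proof.
move=> s_odd b_odd; rewrite dvdzE abszM abszX Euclid_dvdM // Euclid_dvdX //.
by rewrite -!dvdzE (negPf s_odd) (negPf b_odd).
Qed.

Lemma pairing_coef_parity (a b c k q t s : int) :
  (2 %| k)%Z -> (2 %| q)%Z -> ~~ (2 %| s)%Z ->
  c = 8 * a + b * k -> c * q = a + b * t ->
  c ^+ 2 * q = 8 * a ^+ 2 + 2 * a * b * k + 4 * s * b ^+ 2 ->
  ~~ [&& 2 %| a, 2 %| b & 2 %| c]%Z ->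
  [&& 2 %| a + 1, 2 %| b - 1 & 2 %| c]%Z.
Proof.
move=> /dvdzP[k' ->] /dvdzP[q' ->] s_odd E1 E3 Q not_all_even.
have c_even : (2 %| c)%Z by apply/dvdzP; exists (4 * a + b * k'); rewrite E1; ring.
have b_odd : ~~ (2 %| b)%Z.
  apply: contra not_all_even => /dvdzP[b' b_eq]; rewrite c_even andbT.
  have -> : a = (c * q' - b' * t) * 2 by rewrite mulrBl -mulrA E3 b_eq; ring.
  by rewrite b_eq !dvdz_mull.
have a_odd : ~~ (2 %| a)%Z.
  apply/negP => /dvdzP[a' a_eq]; move/dvdzP: c_even Q => [c' ->].
  rewrite a_eq => Q; have : (2 %| s * b ^+ 2)%Z.
    (* Q divided by 4 *)
    by apply/dvdzP; exists (c' ^+ 2 * q' - 4 * a' ^+ 2 - a' * b * k'); lia.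
  by rewrite (negPf (odd_mulz_sqr s_odd b_odd)).
by rewrite c_even andbT; apply/andP; split; lia.
Qed.

Lemma scalemx_intI m p (k : int) :
  k != 0 -> injective ( *:%R k : 'M[int]_(m, p) -> 'M[int]_(m, p)).
Proof.
move=> k_nz A B /matrixP AB; apply/matrixP => i j.
by apply: (mulfI k_nz); have := AB i j; rewrite !mxE.
Qed.

Section Lattice.

Variables (n : nat) (G : 'M[int]_n).

Lemma lformDl x y z : lform G (x + y) z = lform G x z + lform G y z.
Proof. by rewrite /lform !mulmxDl mxE. Qed.

Lemma lformDr x y z : lform G x (y + z) = lform G x y + lform G x z.
Proof. by rewrite /lform linearD /= mulmxDr mxE. Qed.

Lemma lformZl (k : int) x y : lform G (k *: x) y = k * lform G x y.
Proof. by rewrite /lform -!scalemxAl mxE. Qed.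

Lemma lformZr x (k : int) y : lform G x (k *: y) = k * lform G x y.
Proof. by rewrite /lform linearZ /= -scalemxAr mxE. Qed.

Lemma lformC x y : G^T = G -> lform G x y = lform G y x.
Proof.
move=> G_sym; rewrite /lform -[in LHS](trmxK (x *m G *m y^T)) [in LHS]mxE.
by rewrite !trmx_mul trmxK G_sym mulmxA.
Qed.

Lemma lform_sqrD x y : G^T = G ->
  lform G (x + y) (x + y) = lform G x x + 2 * lform G x y + lform G y y.
Proof. by move=> G_sym; rewrite lformDl !lformDr (lformC y x G_sym); ring. Qed.

Lemma prim_span_reduced (u v x : 'rV[int]_n) : prim_span u v x ->
  exists c a b : int, [/\ c != 0, c *: x = a *: u + b *: v
                        & ~~ [&& 2 %| a, 2 %| b & 2 %| c]%Z].
Proof.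
case=> c [a [b [c_nz eq_x]]]; have [N] := ubnP `|c|%N.
elim: N c a b c_nz eq_x => // N IH c a b c_nz eq_x lt_cN.
have [/and3P[/dvdzP[a' a_eq] /dvdzP[b' b_eq] /dvdzP[c' c_eq]] | ] :=
  boolP [&& 2 %| a, 2 %| b & 2 %| c]%Z; last by exists c, a, b.
have c'_nz : c' != 0 by apply: contraNneq c_nz => c'0; rewrite c_eq c'0.
apply: (IH c' a' b') => //; last by move: lt_cN; rewrite c_eq; lia.
apply: (@scalemx_intI _ _ 2) => //.
by rewrite scalerDr !scalerA ![2 * _]mulrC -a_eq -b_eq -c_eq.
Qed.

End Lattice.

Section Mukai.

Variables (n : nat) (G : 'M[int]_n) (H : 'rV[int]_n) (s : int).
Hypotheses (G_sym : G^T = G) (G_even : forall x, (2 %| lform G x x)%Z).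
Hypotheses (HH : lform G H H = 8) (s_odd : ~~ (2 %| s)%Z).

Lemma good_h1_H_add2 D :
  lform G (H + 2 *: D) (H + 2 *: D) = 4 * s -> good_h1 G H (H + 2 *: D) s.
Proof.
move=> sq4; set d := lform G H D.
have H_h1 : lform G H (H + 2 *: D) = 8 + 2 * d by rewrite lformDr lformZr HH.
have d_odd : ~~ (2 %| d)%Z.
  move: sq4 (G_even D) s_odd; rewrite lform_sqrD // lformZl !lformZr HH -/d.
  lia.
have [w d2] := odd_sqrz_mod8 d_odd.
split=> //; split; first by rewrite H_h1; apply/dvdzP; exists (4 + d); ring.
move=> m; exists ((- m * w) *: H + (m * d) *: D); split.
  exists 2, (- 2 * m * w - m * d), (m * d); split => //.
  by apply/rowP => i; rewrite !mxE; ring.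
rewrite lformDr !lformZr HH -/d.
transitivity (m * (d ^+ 2 - 8 * w)); first by ring.
by rewrite d2 addrAC subrr add0r mulr1.
Qed.

Lemma good_h1_eq_H_add2 h1 : good_h1 G H h1 s -> exists D, h1 = H + 2 *: D.
Proof.
case=> h1_sq [H_h1_even surj]; have [x [x_span Hx]] := surj 1.
have [c [a [b [c_nz eq_x not_all_even]]]] := prim_span_reduced x_span.
have pair y : c * lform G y x = a * lform G y H + b * lform G y h1.
  by rewrite -lformZr eq_x lformDr !lformZr.
have E1 : c = 8 * a + b * lform G H h1.
  by have := pair H; rewrite Hx HH mulr1 => ->; ring.
have E3 : c * lform G x x = a + b * lform G x h1.
  by rewrite pair (lformC x H G_sym) Hx mulr1.
have Q : c ^+ 2 * lform G x x =
         8 * a ^+ 2 + 2 * a * b * lform G H h1 + 4 * s * b ^+ 2.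
  transitivity (lform G (c *: x) (c *: x)); first by rewrite lformZl lformZr; ring.
  by rewrite eq_x lform_sqrD // !lformZl !lformZr HH h1_sq; ring.
have /and3P[/dvdzP[a' a_eq] /dvdzP[b' b_eq] /dvdzP[c' c_eq]] :=
  pairing_coef_parity H_h1_even (G_even x) s_odd E1 E3 Q not_all_even.
exists (c' *: x - a' *: H - b' *: h1).
rewrite !scalerBr !scalerA ![2 * _]mulrC -a_eq -b_eq -c_eq eq_x.
by apply/rowP => i; rewrite !mxE; ring.
Qed.

End Mukai.

Theorem lemma3p2 (n : nat) (G : 'M[int]_n) (H : 'rV[int]_n) (s : int) :
  even_lattice G -> primitive H -> lform G H H = 8 -> (s = 1 \/ s = -1) ->
  ((exists h1, good_h1 G H h1 s) <->
   (exists D, mukai_isotropic G 2 (H + 2%:~R *: D) s)) /\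
  (forall h1, good_h1 G H h1 s -> exists D, h1 = H + 2%:~R *: D) /\
  (forall D, mukai_isotropic G 2 (H + 2%:~R *: D) s -> good_h1 G H (H + 2%:~R *: D) s).
Proof.
move=> [G_sym [_ G_even]] _ HH s_pm.
have s_odd : ~~ (2 %| s)%Z by case: s_pm => ->.
have to_good := good_h1_H_add2 G_sym G_even HH s_odd.
have of_good := good_h1_eq_H_add2 G_sym G_even HH s_odd.
rewrite /mukai_isotropic intz (_ : 2 * 2 = 4) //.
split; last by split.
split=> [[h1 good] | [D /to_good good]]; last by exists (H + 2 *: D).
have [D h1_eq] := of_good h1 good; exists D.
by rewrite -h1_eq; case: good.
Qed.
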